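(* Let $b\in\mathbb B^d$ be fixed, $T>0$, and let $\phi_T$ and $G_T$ be the modified corrector and the Green's function. Then, as functions of $a\in\Omega$, $$\frac{\partial\phi_T(x=0)}{\partial a(b)}=-\nabla G_T(b,0)\big(\nabla\phi_T(b)+e(b)\big),$$ $$\frac{\partial}{\partial a(b)}\frac{\partial\phi_T(x=0)}{\partial a(b)}=-2\,\nabla\nabla G_T(b,b)\,\frac{\partial\phi_T(x=0)}{\partial a(b)},\qquad \frac{\partial}{\partial a(b)}\nabla\nabla G_T(b,b)=-\big(\nabla\nabla G_T(b,b)\big)^2.$$ Moreover, $\nabla\nabla G_T(b,b)>0$ and $1-a(b)\nabla\nabla G_T(b,b)>0$.
   Context: $\mathbb B^d$ is the set of nearest-neighbour bonds of $\mathbb Z^d$; $x_b,y_b$ endpoints of $b$ with $y_b-x_b\in\{e_1,\dots,e_d\}$; $\nabla u(b)=u(y_b)-u(x_b)$, $\nabla^*F(x)=\sum_i(F(\{x-e_i,x\})-F(\{x,x+e_i\}))$; $e\in\mathbb R^d$ is a fixed unit vector and $e(b)=e\cdot(y_b-x_b)$. $\Omega=[0,1]^{\mathbb B^d}$. The Green's function: for $a\in\Omega$ and $y\in\mathbb Z^d$, $x\mapsto G_T(a,x,y)$ is the unique $\ell^2(\mathbb Z^d)$ solution of $\frac1TG_T(a,\cdot,y)+\nabla^*(a\nabla G_T(a,\cdot,y))=\delta(\cdot-y)$. $\nabla G_T(b,0)$ is the gradient in the first variable at $b$ with $y=0$, and $\nabla\nabla G_T(b,b')=G_T(y_b,y_{b'})-G_T(x_b,y_{b'})-G_T(y_b,x_{b'})+G_T(x_b,x_{b'})$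 (gradient in both variables). The modified corrector $\phi_T(a,x)$ is the stationary (i.e. $\phi_T(a(\cdot+z),x)=\phi_T(a,x+z)$) field with finite second moment solving $\frac1T\phi_T+\nabla^*(a(\nabla\phi_T+e))=0$ for all $x\in\mathbb Z^d$ and $a\in\Omega$. $\partial/\partial a(b)$ denotes the classical partial derivative with respect to the coordinate $a(b)$ (all other coordinates fixed). *)

From Stdlib Require Import Reals ZArith List.
From Coquelicot Require Import Coquelicot.
From mathcomp Require Import ssreflect ssrbool eqtype ssrnat fintype.
Set Implicit Arguments.
Open Scope R_scope.

Definition Zd (d : nat) := 'I_d -> Z.
Definition origin (d : nat) : Zd d := fun _ => 0%Z.
Definition unitv (d : nat) (i : 'I_d) : Zd d :=
  fun k => if k == i then 1%Z else 0%Z.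
Definition addZd d (x y : Zd d) : Zd d := fun k => (x k + y k)%Z.
Definition subZd d (x y : Zd d) : Zd d := fun k => (x k - y k)%Z.
Definition Zd_eqb d (x y : Zd d) : bool := [forall k, Z.eqb (x k) (y k)].

(* Nearest-neighbour bonds: (x, i) is the bond {x, x + e_i}, so that
   x_b = x and y_b = x + e_i, with y_b - x_b = e_i. *)
Definition bond (d : nat) := (Zd d * 'I_d)%type.
Definition xb d (b : bond d) : Zd d := fst b.
Definition yb d (b : bond d) : Zd d := addZd (fst b) (unitv (snd b)).
Definition bond_eqb d (b b' : bond d) : bool :=
  Zd_eqb (fst b) (fst b') && (snd b == snd b').

Definition coeff (d : nat) := bond d -> R.
Definition in_Omega d (a : coeff d) : Prop := forall b, 0 <= a b <= 1.
Definition shift d (z : Zd d) (a : coeff d) : coeff d :=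
  fun b => a (addZd (fst b) z, snd b).
Definition upd d (a : coeff d) (b : bond d) (t : R) : coeff d :=
  fun b' => if bond_eqb b' b then t else a b'.

Definition grad d (u : Zd d -> R) (b : bond d) : R := u (yb b) - u (xb b).
Definition sum_dirs d (f : 'I_d -> R) : R := fold_right Rplus 0 (map f (enum 'I_d)).
Definition divstar d (F : bond d -> R) (x : Zd d) : R :=
  sum_dirs (fun i => F (subZd x (unitv i), i) - F (x, i)).
Definition delta d (x y : Zd d) : R := if Zd_eqb x y then 1 else 0.

(* e(b) = e . (y_b - x_b) for the fixed vector e = ev. *)
Definition ebond d (ev : 'I_d -> R) (b : bond d) : R := ev (snd b).
Definition is_unit_vector d (ev : 'I_d -> R) : Prop := sum_dirs (fun i => ev i ^ 2) = 1.

(* u in l^2(Z^d): square sums over finite sets of points are bounded. *)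
Definition ell2 d (u : Zd d -> R) : Prop :=
  exists M, forall s : list (Zd d), NoDup s ->
    fold_right Rplus 0 (map (fun x => u x ^ 2) s) <= M.

Definition is_Green d (T : R) (G : coeff d -> Zd d -> Zd d -> R) : Prop :=
  forall a, in_Omega a -> forall y,
    ell2 (fun x => G a x y) /\
    forall x, / T * G a x y + divstar (fun b => a b * grad (fun z => G a z y) b) x
              = delta x y.

Definition is_mod_corrector d (T : R) (ev : 'I_d -> R) (phi : coeff d -> Zd d -> R) : Prop :=
  (forall a z x, in_Omega a -> phi (shift z a) x = phi a (addZd x z)) /\
  (forall a, in_Omega a -> forall x,
     / T * phi a x + divstar (fun b => a b * (grad (phi a) b + ebond ev b)) x = 0) /\
  (forall a, in_Omega a -> exists C, forall x, Rabs (phi a x) <= C).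

(* Classical partial derivative with respect to the coordinate a(b),
   (one-sided at the endpoints of [0,1], since a ranges over Omega). *)
Definition has_pderiv d (F : coeff d -> R) (a : coeff d) (b : bond d) (l : R) : Prop :=
  filterlim (fun t => (F (upd a b t) - F a) / (t - a b))
    (within (fun t => 0 <= t <= 1 /\ t <> a b) (locally (a b))) (locally l).

Definition gradG d (G : coeff d -> Zd d -> Zd d -> R) a (b : bond d) (y : Zd d) : R :=
  G a (yb b) y - G a (xb b) y.
Definition ggG d (G : coeff d -> Zd d -> Zd d -> R) a (b b' : bond d) : R :=
  G a (yb b) (yb b') - G a (xb b) (yb b') - G a (yb b) (xb b') + G a (xb b) (xb b').

From Stdlib Require Import Reals Lra Psatz ZArith List Classical FunctionalExtensionality.
From Coquelicot Require Import Coquelicot.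
From mathcomp Require Import ssreflect ssrbool eqtype ssrnat fintype seq.
Set Implicit Arguments.
Open Scope R_scope.

(* L_a u := u / T + nabla^*(a nabla u) obeys a maximum principle for bounded u:
   near a supremum of u the divergence term is almost nonnegative.  It yields
   uniqueness of bounded solutions, 0 <= G <= T and a strict maximum of G(., y)
   at y, whence g := nabla nabla G(b, b) > 0; since L_a is a symmetric finite
   stencil, G is symmetric.
   Replacing a(b) by t adds the rank-one term (t - a(b)) nabla u(b)
   (delta_{y_b} - delta_{x_b}) to L_a, so by uniqueness (Sherman-Morrison) G(., y)
   and phi for the new coefficient are those for a corrected by a multiple of
   G(., y_b) - G(., x_b), with denominator 1 + (t - a(b)) g.  Thus g,
   nabla G(b, 0) and nabla phi(b) + e(b) are explicit rational functions of t,
   e.g. g_t = g / (1 + (t - a(b)) g), and their derivatives at t = a(b) are the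
   claimed ones.  Starting instead from a(b) = 0 gives
   1 - a(b) g = 1 / (1 + a(b) g_0) > 0. *)

Definition sumR {A : Type} (f : A -> R) (l : list A) : R :=
  fold_right Rplus 0 (List.map f l).

Section Sums.

Variable A : Type.

Lemma sumR_nil (f : A -> R) : sumR f nil = 0.
Proof. by []. Qed.

Lemma sumR_cons (f : A -> R) x l : sumR f (x :: l) = f x + sumR f l.
Proof. by []. Qed.

Lemma sumR_app (f : A -> R) l1 l2 : sumR f (app l1 l2) = sumR f l1 + sumR f l2.
Proof. by elim: l1 => [|x l1 IH]; rewrite ?sumR_nil ?sumR_cons ?IH /=; ring. Qed.

Lemma sumR_ext (f g : A -> R) l : (forall i, f i = g i) -> sumR f l = sumR g l.
Proof. by move=> fg; rewrite /sumR; elim: l => [|x l IH] //=; rewrite fg IH. Qed.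

Lemma sumR_add (f g : A -> R) l : sumR (fun i => f i + g i) l = sumR f l + sumR g l.
Proof. rewrite /sumR; elim: l => [|x l IH] /=; [ring | rewrite IH; ring]. Qed.

Lemma sumR_scal c (f : A -> R) l : sumR (fun i => c * f i) l = c * sumR f l.
Proof. rewrite /sumR; elim: l => [|x l IH] /=; [ring | rewrite IH; ring]. Qed.

Lemma sumR_zero l : sumR (fun _ : A => 0) l = 0.
Proof. rewrite /sumR; elim: l => [|x l IH] /=; [done | rewrite IH; ring]. Qed.

Lemma sumR_lower (f : A -> R) c l : (forall i, c <= f i) -> INR (size l) * c <= sumR f l.
Proof.
move=> cf; rewrite /sumR; elim: l => [|x l IH]; first by rewrite /=; lra.
rewrite [size _]/= S_INR /=; have := cf x; lra.
Qed.

End Sums.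

Lemma sumR_flat_map (A B : Type) (f : A -> R) (g : B -> list A) l :
  sumR f (flat_map g l) = sumR (fun i => sumR f (g i)) l.
Proof.
elim: l => [|x l IH] //.
by rewrite sumR_cons -IH -sumR_app.
Qed.

Lemma sumR_kronecker (I : eqType) (f : I -> R) j (l : list I) :
  uniq l -> j \in l -> sumR (fun i => if i == j then f i else 0) l = f j.
Proof.
have notin l' : j \notin l' -> sumR (fun i => if i == j then f i else 0) l' = 0.
{ elim: l' => [|x l' IH] //; rewrite in_cons negb_or => /andP [/negbTE xj /IH IH'].
  by rewrite sumR_cons eq_sym xj IH' Rplus_0_l. }
elim: l => [|x l IH] // /andP [xl ul]; rewrite in_cons sumR_cons => /orP [/eqP jx | jl].
- by subst x; rewrite eqxx notin // Rplus_0_r.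
- have /negbTE -> : x != j by apply: contraNneq xl => ->.
  by rewrite IH // Rplus_0_l.
Qed.

Lemma sum_dirsE d (f : 'I_d -> R) : sum_dirs f = sumR f (enum 'I_d).
Proof. by []. Qed.

Section Lattice.

Variable d : nat.

Lemma Zd_eqP (x y : Zd d) : reflect (x = y) (Zd_eqb x y).
Proof.
apply: (iffP forallP) => [xy | -> k]; last exact: Z.eqb_refl.
by apply: functional_extensionality => k; apply/Z.eqb_eq/xy.
Qed.

Lemma delta_refl (x : Zd d) : delta x x = 1.
Proof. by rewrite /delta; case: Zd_eqP. Qed.

Lemma delta_neq (x y : Zd d) : x <> y -> delta x y = 0.
Proof. by rewrite /delta; case: Zd_eqP. Qed.

Lemma delta_sym (x y : Zd d) : delta x y = delta y x.
Proof. by rewrite /delta; case: Zd_eqP => [->|xy]; case: Zd_eqP => // yx; case: xy. Qed.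

Lemma delta_bounds (x y : Zd d) : 0 <= delta x y <= 1.
Proof. rewrite /delta; case: Zd_eqb; lra. Qed.

Lemma subZd_addZd (x : Zd d) i : addZd (subZd x (unitv i)) (unitv i) = x.
Proof. by apply: functional_extensionality => k; rewrite /addZd /subZd; lia. Qed.

Lemma subZd_eq (x p : Zd d) i : subZd x (unitv i) = p <-> x = addZd p (unitv i).
Proof.
split=> [<- | ->]; first by rewrite subZd_addZd.
by apply: functional_extensionality => k; rewrite /addZd /subZd; lia.
Qed.

Lemma xb_neq_yb (b : bond d) : xb b <> yb b.
Proof.
case: b => x i; rewrite /xb /yb /= => /(f_equal (fun f => f i)).
rewrite /addZd /unitv eqxx; lia.
Qed.

Lemma bond_eqP (b' b : bond d) : reflect (b' = b) (bond_eqb b' b).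
Proof.
case: b b' => [x i] [x' i']; rewrite /bond_eqb /=.
apply: (iffP andP) => [[/Zd_eqP -> /eqP ->] // | [-> ->]].
by split; [apply/Zd_eqP | ].
Qed.

Lemma upd_self (a : coeff d) b t : upd a b t b = t.
Proof. by rewrite /upd; case: bond_eqP. Qed.

Lemma upd_upd (a : coeff d) b s t : upd (upd a b s) b t = upd a b t.
Proof. by apply: functional_extensionality => b'; rewrite /upd; case: bond_eqb. Qed.

Lemma upd_id (a : coeff d) b : upd a b (a b) = a.
Proof. by apply: functional_extensionality => b'; rewrite /upd; case: bond_eqP => [->|]. Qed.

Lemma in_Omega_upd (a : coeff d) b t : in_Omega a -> 0 <= t <= 1 -> in_Omega (upd a b t).
Proof. by move=> Ha Ht b'; rewrite /upd; case: bond_eqb. Qed.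

End Lattice.

Definition bounded d (u : Zd d -> R) : Prop := exists B, forall x, Rabs (u x) <= B.

Lemma bounded_lin d (u v : Zd d -> R) al be : bounded u -> bounded v ->
  bounded (fun z => al * u z + be * v z).
Proof.
move=> [B1 uB1] [B2 vB2]; exists (Rabs al * B1 + Rabs be * B2) => x.
apply: Rle_trans (Rabs_triang _ _) _; rewrite !Rabs_mult.
have := Rmult_le_compat_l _ _ _ (Rabs_pos al) (uB1 x).
have := Rmult_le_compat_l _ _ _ (Rabs_pos be) (vB2 x); lra.
Qed.

Lemma bounded_sub d (u v : Zd d -> R) : bounded u -> bounded v -> bounded (fun z => u z - v z).
Proof.
move=> bu bv; have [B uvB] := bounded_lin 1 (-1) bu bv.
by exists B => x; have := uvB x; congr (Rabs _ <= _); ring.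
Qed.

Lemma bounded_of_ell2 d (u : Zd d -> R) : ell2 u -> bounded u.
Proof.
move=> [M uM]; exists (M + 1) => x.
have /= := uM [:: x] (NoDup_cons _ (@List.in_nil _ x) (NoDup_nil _)).
rewrite Rplus_0_r; have := pow2_abs (u x); have := Rabs_pos (u x).
case: (Rle_lt_dec (Rabs (u x)) 1); nra.
Qed.

Lemma bounded_approx_sup d (u : Zd d -> R) : bounded u ->
  exists M, (forall z, u z <= M) /\ forall eps, 0 < eps -> exists x, M - eps < u x.
Proof.
move=> [B uB].
have range_bound : bound (fun r => exists x, r = u x).
{ by exists B => r [x ->]; have := uB x; have := Rle_abs (u x); lra. }
have range_inhabited : exists r, exists x, r = u x by exists (u (@origin d)), (@origin d).
have [M [Mub Mlub]] := completeness _ range_bound range_inhabited.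
exists M; split=> [z | eps eps_pos]; first by apply: Mub; exists z.
apply: NNPP => no_x; have : M <= M - eps; last lra.
apply: Mlub => r [z ->]; apply: Rnot_lt_le => zM; apply: no_x; exists z; lra.
Qed.

Definition Lop d T (a : coeff d) (u : Zd d -> R) (x : Zd d) : R :=
  / T * u x + divstar (fun b => a b * grad u b) x.

Definition dipole d (b : bond d) (x : Zd d) : R := delta x (yb b) - delta x (xb b).

Definition stencil d T (a : coeff d) (x : Zd d) : list (R * Zd d) :=
  (/ T, x) :: flat_map (fun i =>
     [:: (a (subZd x (unitv i), i), addZd (subZd x (unitv i)) (unitv i));
         (- a (subZd x (unitv i), i), subZd x (unitv i));
         (- a (x, i), addZd x (unitv i)); (a (x, i), x)]) (enum 'I_d).

Definition lincomb d (L : list (R * Zd d)) (u : Zd d -> R) : R :=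
  sumR (fun p => fst p * u (snd p)) L.

Section Stencils.

Variable d : nat.

Lemma lincomb_lin (L : list (R * Zd d)) al be u v :
  lincomb L (fun z => al * u z + be * v z) = al * lincomb L u + be * lincomb L v.
Proof. by rewrite /lincomb -!sumR_scal -sumR_add; apply: sumR_ext => p; ring. Qed.

Lemma lincomb_comm (L1 L2 : list (R * Zd d)) (H : Zd d -> Zd d -> R) :
  lincomb L1 (fun x => lincomb L2 (H x)) = lincomb L2 (fun z => lincomb L1 (fun x => H x z)).
Proof.
rewrite /lincomb; elim: L1 => [|p L1 IH].
  by rewrite sumR_nil -(sumR_zero L2); apply: sumR_ext => q; rewrite sumR_nil; ring.
rewrite sumR_cons IH -sumR_scal -sumR_add; apply: sumR_ext => q; rewrite sumR_cons; ring.
Qed.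

Lemma lincomb_bound (L : list (R * Zd d)) u B : (forall z, Rabs (u z) <= B) ->
  Rabs (lincomb L u) <= sumR (fun p => Rabs (fst p)) L * B.
Proof.
move=> uB; rewrite /lincomb; elim: L => [|p L IH].
  by rewrite !sumR_nil Rabs_R0; have := uB (@origin d); have := Rabs_pos (u (@origin d)); lra.
rewrite !sumR_cons; apply: Rle_trans (Rabs_triang _ _) _; rewrite Rabs_mult.
have := Rmult_le_compat_l (Rabs (fst p)) _ _ (Rabs_pos _) (uB (snd p)); lra.
Qed.

End Stencils.

Section Operator.

Variables (d : nat) (T : R) (a : coeff d).

Lemma divstar_add (F H : bond d -> R) x :
  divstar (fun b => F b + H b) x = divstar F x + divstar H x.
Proof. by rewrite /divstar !sum_dirsE -sumR_add; apply: sumR_ext => i; ring. Qed.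

Lemma divstar_upd b t (F : bond d -> R) x :
  divstar (fun b' => upd a b t b' * F b') x
  = divstar (fun b' => a b' * F b') x + (t - a b) * F b * dipole b x.
Proof.
case: b => p j; set C := (t - a (p, j)) * F (p, j).
pose jump i := (if Zd_eqb (subZd x (unitv i)) p then C else 0) - (if Zd_eqb x p then C else 0).
have termE i :
  upd a (p, j) t (subZd x (unitv i), i) * F (subZd x (unitv i), i)
    - upd a (p, j) t (x, i) * F (x, i)
  = (a (subZd x (unitv i), i) * F (subZd x (unitv i), i) - a (x, i) * F (x, i))
    + (if i == j then jump i else 0).
{ rewrite /jump /upd /bond_eqb /=; case: eqP => [-> | _]; last by rewrite !andbF; ring.
  rewrite !andbT /C.
  by case: Zd_eqP => [-> | _]; case: Zd_eqP => [-> | _]; ring. }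
rewrite /divstar !sum_dirsE (sumR_ext _ _ _ termE) sumR_add.
rewrite sumR_kronecker ?enum_uniq ?mem_enum // /jump /dipole /delta /yb /xb /=.
have -> : Zd_eqb (subZd x (unitv j)) p = Zd_eqb x (addZd p (unitv j)).
{ by apply/Zd_eqP/Zd_eqP => /subZd_eq. }
by case: Zd_eqb; case: Zd_eqb; rewrite -/C; ring.
Qed.

Lemma Lop_upd b t u x : Lop T (upd a b t) u x = Lop T a u x + (t - a b) * grad u b * dipole b x.
Proof. rewrite /Lop divstar_upd; ring. Qed.

Lemma Lop_stencil u x : Lop T a u x = lincomb (stencil T a x) u.
Proof.
rewrite /Lop /lincomb /stencil sumR_cons /divstar sum_dirsE sumR_flat_map; congr (_ + _).
by apply: sumR_ext => i; rewrite !sumR_cons sumR_nil /grad /yb /xb /=; ring.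
Qed.

Lemma Lop_lin al be u v x :
  Lop T a (fun z => al * u z + be * v z) x = al * Lop T a u x + be * Lop T a v x.
Proof. by rewrite !Lop_stencil lincomb_lin. Qed.

Lemma Lop_sub u v x : Lop T a (fun z => u z - v z) x = Lop T a u x - Lop T a v x.
Proof.
have -> : (fun z => u z - v z) = (fun z => 1 * u z + -1 * v z).
{ by apply: functional_extensionality => z; ring. }
rewrite Lop_lin; ring.
Qed.

Lemma Lop_zero x : Lop T a (fun _ => 0) x = 0.
Proof.
by rewrite Lop_stencil /lincomb -[RHS](sumR_zero (stencil T a x)); apply: sumR_ext => p; ring.
Qed.

Lemma Lop_comm (H : Zd d -> Zd d -> R) p q :
  Lop T a (fun x => Lop T a (H x) q) p = Lop T a (fun z => Lop T a (fun x => H x z) p) q.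
Proof.
have -> : (fun x => Lop T a (H x) q) = (fun x => lincomb (stencil T a q) (H x)).
{ by apply: functional_extensionality => x; rewrite Lop_stencil. }
have -> : (fun z => Lop T a (fun x => H x z) p)
          = (fun z => lincomb (stencil T a p) (fun x => H x z)).
{ by apply: functional_extensionality => z; rewrite Lop_stencil. }
by rewrite !Lop_stencil lincomb_comm.
Qed.

Lemma Lop_delta_sym p q : Lop T a (fun z => delta z p) q = Lop T a (fun z => delta z q) p.
Proof.
rewrite /Lop /divstar !sum_dirsE /grad /yb /xb /= (delta_sym q p); congr (_ + _).
apply: sumR_ext => i; rewrite !subZd_addZd.
have [-> // | qp] := classic (q = p).
have bondE p0 q0 : a (subZd q0 (unitv i), i) * delta (subZd q0 (unitv i)) p0
                   = a (p0, i) * delta (addZd p0 (unitv i)) q0.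
{ have [E | E] := classic (subZd q0 (unitv i) = p0).
  - by rewrite E delta_refl -(proj1 (subZd_eq _ _ _) E) delta_refl.
  - rewrite (delta_neq E) delta_neq; first ring.
    by move=> E'; apply: E; apply/subZd_eq. }
rewrite (delta_neq qp) (delta_neq (not_eq_sym qp)).
have := bondE p q; have := bondE q p; lra.
Qed.

Hypothesis Ha : in_Omega a.

Lemma Lop_lower u x M : (forall z, u z <= M) ->
  / T * u x + 2 * INR d * (u x - M) <= Lop T a u x.
Proof.
move=> uM; rewrite /Lop /divstar sum_dirsE; apply: Rplus_le_compat_l.
have weighted (al v w : R) : 0 <= al <= 1 -> v <= M -> w <= M -> w - M <= al * (w - v).
{ move=> al01 vM wM; nra. }
have -> : 2 * INR d * (u x - M) = INR (size (enum 'I_d)) * (2 * (u x - M)).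
{ by rewrite size_enum_ord; ring. }
apply: sumR_lower => i; rewrite /grad /yb /xb /= subZd_addZd.
have := weighted _ _ _ (Ha (subZd x (unitv i), i)) (uM (subZd x (unitv i))) (uM x).
have := weighted _ _ _ (Ha (x, i)) (uM (addZd x (unitv i))) (uM x).
by move: (a _) (a _) (u x) (u _) (u _) => a1 a2 u0 u1 u2; lra.
Qed.

Hypothesis HT : 0 < T.

Lemma Lop_max_principle u (S : list (Zd d)) K m : bounded u ->
  (forall x, ~ In x S -> Lop T a u x <= K) -> T * K <= m ->
  (forall s, In s S -> u s <= m) -> forall x, u x <= m.
Proof.
move=> bu LuK TKm uS x0; apply: Rnot_lt_le => mu.
have [M [uM Msup]] := bounded_approx_sup bu.
have := uM x0; set D := 2 * INR d * T => mM.
have D_ge0 : 0 <= D by have := pos_INR d; rewrite /D; nra.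
(* near a point where u exceeds M - eps, T * Lop u >= u - D * eps > m *)
set eps := (M - m) / (1 + D).
have eps_pos : 0 < eps by apply: Rdiv_lt_0_compat; lra.
have epsE : eps * (1 + D) = M - m by rewrite /eps; field; lra.
have [x ux] := Msup eps eps_pos.
have xS : ~ In x S by move=> /uS; nra.
have := Rmult_le_compat_l T _ _ (Rlt_le _ _ HT) (Rle_trans _ _ _ (Lop_lower u x uM) (LuK x xS)).
have -> : T * (/ T * u x + 2 * INR d * (u x - M)) = u x + D * (u x - M) by rewrite /D; field; lra.
nra.
Qed.

Lemma Lop_min_principle u : bounded u -> (forall x, 0 <= Lop T a u x) -> forall x, 0 <= u x.
Proof.
move=> [B uB] Lu x.
have bu' : bounded (fun z : Zd d => 0 - u z) by exists B => z; rewrite Rminus_0_l Rabs_Ropp.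
suff : 0 - u x <= 0 by lra.
apply: (@Lop_max_principle _ nil 0 0 bu') => //; last lra.
by move=> z _; rewrite Lop_sub Lop_zero; have := Lu z; lra.
Qed.

Lemma Lop_bounded_unique u v : bounded u -> bounded v ->
  (forall x, Lop T a u x = Lop T a v x) -> forall x, u x = v x.
Proof.
move=> bu bv Luv x.
have uv : 0 <= u x - v x.
{ by apply: (Lop_min_principle (bounded_sub bu bv)) => z; rewrite Lop_sub Luv; lra. }
have vu : 0 <= v x - u x.
{ by apply: (Lop_min_principle (bounded_sub bv bu)) => z; rewrite Lop_sub Luv; lra. }
lra.
Qed.

End Operator.

Definition gradG2 d (G : coeff d -> Zd d -> Zd d -> R) a (b : bond d) (x : Zd d) : R :=
  G a x (yb b) - G a x (xb b).

Lemma grad_gradG2 d (G : coeff d -> Zd d -> Zd d -> R) a b : grad (gradG2 G a b) b = ggG G a b b.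
Proof. rewrite /grad /gradG2 /ggG; ring. Qed.

Section Green.

Variables (d : nat) (T : R) (G : coeff d -> Zd d -> Zd d -> R).
Hypotheses (HT : 0 < T) (HG : is_Green T G).

Section FixedCoefficient.

Variable a : coeff d.
Hypothesis Ha : in_Omega a.

Lemma Green_eq x y : Lop T a (fun z => G a z y) x = delta x y.
Proof. exact: (proj2 (HG Ha y) x). Qed.

Lemma Green_bounded y : bounded (fun z => G a z y).
Proof. exact/bounded_of_ell2/(proj1 (HG Ha y)). Qed.

Lemma Green_nonneg x y : 0 <= G a x y.
Proof.
apply: (Lop_min_principle Ha HT (Green_bounded y)) => z.
by rewrite Green_eq; have := delta_bounds z y; lra.
Qed.

Lemma Green_le_T x y : G a x y <= T.
Proof.
apply: (@Lop_max_principle _ _ _ Ha HT _ nil 1 T (Green_bounded y)) => //; last lra.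
by move=> z _; rewrite Green_eq; have := delta_bounds z y; lra.
Qed.

Lemma Green_le_diag x y : G a x y <= G a y y.
Proof.
apply: (@Lop_max_principle _ _ _ Ha HT _ [:: y] 0 (G a y y) (Green_bounded y)).
- by move=> z zy; rewrite Green_eq delta_neq //; [lra | move=> zy'; apply: zy; left].
- by rewrite Rmult_0_r; apply: Green_nonneg.
- by move=> s [<- | []]; lra.
Qed.

Lemma Green_diag_pos y : 0 < G a y y.
Proof.
apply: Rnot_le_lt => Gyy.
have G0 : (fun z => G a z y) = (fun _ => 0).
{ apply: functional_extensionality => z.
  have := Green_le_diag z y; have := Green_nonneg z y; lra. }
by have := Green_eq y y; rewrite G0 Lop_zero delta_refl; lra.
Qed.

(* were the maximum of G(., y) attained at x <> y, Lop_lower would give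
   delta x y >= G(y, y) / T > 0 *)
Lemma Green_lt_diag x y : x <> y -> G a x y < G a y y.
Proof.
move=> xy; apply: Rnot_le_lt => Gyx.
have := Lop_lower T Ha (fun z => G a z y) x (fun z => Green_le_diag z y).
rewrite Green_eq (delta_neq xy) (_ : G a x y = G a y y); last first.
  by have := Green_le_diag x y; lra.
have := Green_diag_pos y; have := Rinv_0_lt_compat T HT.
move: (G a y y) (/ T) => g iT; nra.
Qed.

Lemma Green_sym x y : G a x y = G a y x.
Proof.
(* Lop also inverts G in the second variable: commute the two stencils and use
   that Lop is symmetric on point masses *)
have Lop_second q : forall x', Lop T a (G a x') q = delta x' q.
{ apply: (@Lop_bounded_unique _ _ _ Ha HT (fun x' => Lop T a (G a x') q) (fun x' => delta x' q))
    => [||p].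
  - exists (sumR (fun p => Rabs (fst p)) (stencil T a q) * T) => x''.
    rewrite Lop_stencil; apply: lincomb_bound => z.
    by rewrite Rabs_pos_eq; [apply: Green_le_T | apply: Green_nonneg].
  - by exists 1 => x''; case: (delta_bounds x'' q) => *; rewrite Rabs_pos_eq.
  - rewrite (Lop_comm _ _ (fun x'' z => G a x'' z)).
    have -> : (fun z => Lop T a (fun x'' => G a x'' z) p) = (fun z => delta z p).
    { by apply: functional_extensionality => z; rewrite Green_eq delta_sym. }
    exact: Lop_delta_sym. }
apply: (@Lop_bounded_unique _ _ _ Ha HT (G a x) (fun z => G a z x)) => [||q].
- by exists T => z; rewrite Rabs_pos_eq; [apply: Green_le_T | apply: Green_nonneg].
- exact: Green_bounded.
- by rewrite Lop_second Green_eq delta_sym.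
Qed.

Lemma ggG_pos b : 0 < ggG G a b b.
Proof.
rewrite /ggG; have := Green_lt_diag (@xb_neq_yb _ b).
have := Green_lt_diag (not_eq_sym (@xb_neq_yb _ b)); lra.
Qed.

Lemma gradG2_gradG b x : gradG2 G a b x = gradG G a b x.
Proof. by rewrite /gradG2 /gradG !(Green_sym x). Qed.

Lemma Lop_gradG2 b x : Lop T a (gradG2 G a b) x = dipole b x.
Proof. by rewrite /gradG2 Lop_sub !Green_eq. Qed.

Lemma gradG2_bounded b : bounded (gradG2 G a b).
Proof. exact: bounded_sub (Green_bounded _) (Green_bounded _). Qed.

Section RankOneUpdate.

Variables (b : bond d) (t : R).
Hypotheses (Ht : 0 <= t <= 1) (HD : 1 + (t - a b) * ggG G a b b <> 0).

(* Sherman-Morrison for the rank-one perturbation of Lop_upd *)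
Lemma rank_one_update (f : Zd d -> R) (s : R) (u v : Zd d -> R) :
  bounded u -> bounded v ->
  (forall x, Lop T a u x = f x) ->
  (forall x, Lop T (upd a b t) v x = f x - (t - a b) * s * dipole b x) ->
  forall x, v x = u x - (t - a b) * (grad u b + s) / (1 + (t - a b) * ggG G a b b)
                        * gradG2 G a b x.
Proof.
move=> bu bv Lu Lv x; set c := (t - a b) * _ / _.
rewrite (Lop_bounded_unique (in_Omega_upd b Ha Ht) HT bv
          (bounded_lin 1 (- c) bu (gradG2_bounded b)) _ x); first ring.
move=> z; rewrite Lv Lop_lin !Lop_upd Lu Lop_gradG2 grad_gradG2 /c; field; exact: HD.
Qed.

Lemma grad_rank_one_update (f : Zd d -> R) (s : R) (u v : Zd d -> R) :
  bounded u -> bounded v ->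
  (forall x, Lop T a u x = f x) ->
  (forall x, Lop T (upd a b t) v x = f x - (t - a b) * s * dipole b x) ->
  grad v b + s = (grad u b + s) / (1 + (t - a b) * ggG G a b b).
Proof.
move=> bu bv Lu Lv; rewrite {1}/grad !(rank_one_update _ bu bv Lu Lv).
move: (grad_gradG2 G a b) HD; rewrite /grad; set g := ggG G a b b => <- HD'.
field; exact: HD'.
Qed.

End RankOneUpdate.

End FixedCoefficient.

Section Update.

Variables (a : coeff d) (b : bond d) (t : R).
Hypotheses (Ha : in_Omega a) (Ht : 0 <= t <= 1) (HD : 1 + (t - a b) * ggG G a b b <> 0).

Lemma gradG_upd y :
  gradG G (upd a b t) b y = gradG G a b y / (1 + (t - a b) * ggG G a b b).
Proof.
have Ha' := in_Omega_upd b Ha Ht.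
have Lv x : Lop T (upd a b t) (fun z => G (upd a b t) z y) x
             = delta x y - (t - a b) * 0 * dipole b x.
{ by rewrite Green_eq //; ring. }
have := grad_rank_one_update Ha Ht HD _ (Green_bounded Ha y) (Green_bounded Ha' y)
  (fun x => Green_eq Ha x y) Lv.
by rewrite !Rplus_0_r.
Qed.

Lemma ggG_upd : ggG G (upd a b t) b b = ggG G a b b / (1 + (t - a b) * ggG G a b b).
Proof.
have ggGE a' : ggG G a' b b = gradG G a' b (yb b) - gradG G a' b (xb b).
{ rewrite /ggG /gradG; ring. }
by rewrite ggGE !gradG_upd /Rdiv -Rmult_minus_distr_r -ggGE.
Qed.

End Update.

Section Corrector.

Variables (ev : 'I_d -> R) (phi : coeff d -> Zd d -> R).
Hypothesis HP : is_mod_corrector T ev phi.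

Lemma corrector_eq a x : in_Omega a ->
  Lop T a (phi a) x = - divstar (fun b => a b * ebond ev b) x.
Proof.
move=> Ha; have := proj1 (proj2 HP) a Ha x.
have -> : (fun b => a b * (grad (phi a) b + ebond ev b))
          = (fun b => a b * grad (phi a) b + a b * ebond ev b).
{ by apply: functional_extensionality => b; ring. }
rewrite divstar_add /Lop; lra.
Qed.

Lemma corrector_bounded a : in_Omega a -> bounded (phi a).
Proof. exact: (proj2 (proj2 HP) a). Qed.

Variables (a : coeff d) (b : bond d) (t : R).
Hypotheses (Ha : in_Omega a) (Ht : 0 <= t <= 1) (HD : 1 + (t - a b) * ggG G a b b <> 0).

Lemma Lop_corrector_upd x :
  Lop T (upd a b t) (phi (upd a b t)) x
  = - divstar (fun b' => a b' * ebond ev b') x - (t - a b) * ebond ev b * dipole b x.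
Proof.
rewrite corrector_eq ?divstar_upd; [ring | exact: in_Omega_upd].
Qed.

Lemma phi_upd x :
  phi (upd a b t) x = phi a x - (t - a b) * (grad (phi a) b + ebond ev b)
                                / (1 + (t - a b) * ggG G a b b) * gradG2 G a b x.
Proof.
exact: (rank_one_update Ha Ht HD _ (corrector_bounded Ha)
         (corrector_bounded (in_Omega_upd b Ha Ht)) (fun x => corrector_eq x Ha)
         Lop_corrector_upd).
Qed.

Lemma grad_phi_upd :
  grad (phi (upd a b t)) b + ebond ev b
  = (grad (phi a) b + ebond ev b) / (1 + (t - a b) * ggG G a b b).
Proof.
exact: (grad_rank_one_update Ha Ht HD _ (corrector_bounded Ha)
         (corrector_bounded (in_Omega_upd b Ha Ht)) (fun x => corrector_eq x Ha)
         Lop_corrector_upd).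
Qed.

End Corrector.

Lemma one_sub_ggG_pos a b : in_Omega a -> 0 < 1 - a b * ggG G a b b.
Proof.
move=> Ha; have Ha0 := in_Omega_upd b Ha (ltac:(lra) : 0 <= 0 <= 1).
have g0_pos := ggG_pos Ha0 b; have ab01 := Ha b.
move: (@ggG_upd (upd a b 0) b (a b) Ha0 ab01).
rewrite upd_upd upd_id upd_self Rminus_0_r => ->; last by nra.
move: g0_pos; set g0 := ggG G _ b b => g0_pos.
have D_pos : 0 < 1 + a b * g0 by nra.
apply: (Rmult_lt_reg_r (1 + a b * g0)) => //.
have -> : (1 - a b * (g0 / (1 + a b * g0))) * (1 + a b * g0) = 1 by field; lra.
lra.
Qed.

Lemma upd_denominator_pos a b t : in_Omega a -> 0 <= t <= 1 ->
  0 < 1 + (t - a b) * ggG G a b b.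
Proof.
move=> Ha Ht; have := ggG_pos Ha b; have := one_sub_ggG_pos b Ha; nra.
Qed.

End Green.

Lemma has_pderiv_of_is_derive d (F : coeff d -> R) (a : coeff d) b (r : R -> R) l :
  0 <= a b <= 1 -> (forall t, 0 <= t <= 1 -> F (upd a b t) = r t) ->
  is_derive r (a b) l -> has_pderiv F a b l.
Proof.
move=> ab01 Fr /is_derive_Reals r' P [eps HP].
have [delta Hdelta] := r' eps (cond_pos eps).
have Fa : F a = r (a b) by rewrite -Fr // upd_id.
exists delta => t tab [t01 tne]; apply: HP.
have := Hdelta (t - a b) (Rminus_eq_contra _ _ tne) tab.
by rewrite Fr // Fa; have -> : a b + (t - a b) = t by ring.
Qed.

Theorem lemma7 (d : nat) (ev : 'I_d -> R) (T : R)
  (G : coeff d -> Zd d -> Zd d -> R) (phi : coeff d -> Zd d -> R) (b : bond d) :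
  is_unit_vector ev -> 0 < T ->
  is_Green T G -> is_mod_corrector T ev phi ->
  forall a : coeff d, in_Omega a ->
    has_pderiv (fun a' => phi a' (@origin d)) a b
      (- gradG G a b (@origin d) * (grad (phi a) b + ebond ev b)) /\
    has_pderiv (fun a' => - gradG G a' b (@origin d) * (grad (phi a') b + ebond ev b)) a b
      (- 2 * ggG G a b b * (- gradG G a b (@origin d) * (grad (phi a) b + ebond ev b))) /\
    has_pderiv (fun a' => ggG G a' b b) a b (- (ggG G a b b) ^ 2) /\
    0 < ggG G a b b /\
    0 < 1 - a b * ggG G a b b.
Proof.
move=> _ HT HG HP a Ha.
have D_pos t : 0 <= t <= 1 -> 0 < 1 + (t - a b) * ggG G a b b.
{ exact: (@upd_denominator_pos _ _ _ HT HG a b t Ha). }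
have D_neq t (Ht : 0 <= t <= 1) : 1 + (t - a b) * ggG G a b b <> 0.
{ by have := D_pos t Ht; lra. }
set g := ggG G a b b in D_pos D_neq *.
set g0 := gradG G a b (@origin d); set c := grad (phi a) b + ebond ev b.
split; [|split; [|split]].
- apply: (@has_pderiv_of_is_derive _ _ a b
            (fun t => phi a (@origin d) - (t - a b) * c / (1 + (t - a b) * g) * g0) _ (Ha b))
    => [t Ht|].
  + by rewrite (phi_upd HT HG HP Ha Ht (D_neq t Ht)) (gradG2_gradG HT HG Ha).
  + auto_derive; first by have := D_pos _ (Ha b); lra.
    rewrite Rplus_opp_r; field.
- apply: (@has_pderiv_of_is_derive _ _ a b
            (fun t => - (g0 / (1 + (t - a b) * g)) * (c / (1 + (t - a b) * g))) _ (Ha b))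
    => [t Ht|].
  + by rewrite (gradG_upd HT HG Ha Ht (D_neq t Ht)) (grad_phi_upd HT HG HP Ha Ht (D_neq t Ht)).
  + auto_derive; first by have := D_pos _ (Ha b); lra.
    rewrite Rplus_opp_r; field.
- apply: (@has_pderiv_of_is_derive _ _ a b (fun t => g / (1 + (t - a b) * g)) _ (Ha b))
    => [t Ht|].
  + exact: (ggG_upd HT HG Ha Ht (D_neq t Ht)).
  + auto_derive; first by have := D_pos _ (Ha b); lra.
    rewrite Rplus_opp_r; field.
- exact: (conj (ggG_pos HT HG Ha b) (one_sub_ggG_pos HT HG b Ha)).
Qed.
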